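(* Fix $\alpha>0$ and positive integers $n$ and $h$. If $\pi\in S_n$ is chosen uniformly at random, then $$\Pr\big[\mathrm{Int}(\pi,\pi+h)\ge n^{2/3+\alpha}\big]\le\big(e^5 n^{-3\alpha/2}\big)^{n^{2/3+\alpha}}.$$
   Context: For a sequence $\sigma=(\sigma(1),\dots,\sigma(n))$ of distinct integers, an exact pattern of $\sigma$ is a sequence $\rho=(\rho(1),\dots,\rho(k))$ such that there are indices $1\le i_1<\dots<i_k\le n$ with $\sigma(i_j)=\rho(j)$ for all $j$. For $\pi\in S_n$ (in one-line notation) and an integer $h$, $\pi+h$ denotes the sequence $(\pi(1)+h,\dots,\pi(n)+h)$. The ordered intersection $\mathrm{Int}(\sigma,\tau)$ of two such sequences is the largest $k$ such that $\sigma$ and $\tau$ share a common exact pattern of length $k$. *)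

From mathcomp Require Import all_boot all_fingroup.
From Stdlib Require Import Reals.
Set Implicit Arguments. Unset Strict Implicit. Unset Printing Implicit Defensive.

Definition oneline n (s : 'S_n) : seq nat := [seq (s i).+1 | i <- enum 'I_n].

Definition shift_seq (h : nat) (s : seq nat) : seq nat := [seq x + h | x <- s].

(* Ordered intersection: largest length of a common exact pattern, i.e. of a
   sequence that is a subsequence (subseq) of both. Every exact pattern of s is
   mask m s for some bitmask m of length size s. *)
Definition Int (s t : seq nat) : nat :=
  \max_(m : (size s).-tuple bool | subseq (mask m s) t) size (mask m s).

Definition Rleb (x y : R) : bool := if Rle_dec x y then true else false.

Definition prob_Int_ge (n h : nat) (a : R) : R :=
  (INR #|[set s : 'S_n | Rleb (Rpower (INR n) (2/3 + a))
                              (INR (Int (oneline s) (shift_seq h (oneline s))))]|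
   / INR (n `!))%R.

From Stdlib Require Import Factorial Reals Lra.
From mathcomp Require Import all_boot all_fingroup zify.
Set Implicit Arguments. Unset Strict Implicit. Unset Printing Implicit Defensive.

(* If Int(pi, pi + h) >= k, there are k-sets I, J of positions on which the
   values of pi, read in increasing order of position, satisfy
   pi(I) = pi(J) + h. For fixed I and J such a pi is determined by its values
   off J, since each value on J is h less than a value at a partner position
   in I; so at most C(n,k)^2 n!/k! permutations qualify, and the probability is
   at most C(n,k)^2/k! <= n^(2k)/k!^3 <= (e^3 n^2/k^3)^k, by k^k <= e^k k!.
   For k = ceil(n^(2/3+alpha)) we have k^3 >= n^(2+3 alpha), so the base is at
   most e^3 n^(-3 alpha) <= e^5 n^(-3 alpha/2); when that bound is >= 1 there
   is nothing to prove. *)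

Lemma Int_attained (s t : seq nat) :
  exists p, [/\ subseq p s, subseq p t & size p = Int s t].
Proof.
pose A := [pred m : (size s).-tuple bool | subseq (mask m s) t].
have [|m pat_m eq_m] := eq_bigmax_cond (fun m => size (mask m s)) (A := A).
  by apply/card_gt0P; exists [tuple of nseq (size s) false]; rewrite inE /= mask_false sub0seq.
by exists (mask m s); rewrite mask_subseq /Int eq_m.
Qed.

Lemma enum_set_subseq (T : finType) (P : seq T) :
  subseq P (enum T) -> enum [set x in P] = P.
Proof.
move=> /(subseq_uniqP (enum_uniq T)) {2}->.
by rewrite enumT /enum_mem; apply: eq_filter => x; exact: in_set.
Qed.

Lemma subseq_map_enum (T : finType) (U : eqType) (f : T -> U) (q : seq U) :
  subseq q (map f (enum T)) -> exists I : {set T}, q = map f (enum I).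
Proof.
case/subseqP=> m _ ->; exists [set x in mask m (enum T)].
by rewrite enum_set_subseq ?mask_subseq // map_mask.
Qed.

Lemma card_bigcup_leq_sum (I T : finType) (P : pred I) (F : I -> {set T}) :
  #|\bigcup_(i | P i) F i| <= \sum_(i | P i) #|F i|.
Proof.
apply: (big_ind2 (fun (A : {set T}) m => #|A| <= m)) => [|A1 m1 A2 m2 le1 le2|//].
  by rewrite cards0.
exact: leq_trans (leq_card_setU A1 A2).1 (leq_add le1 le2).
Qed.

Section ShiftMatching.
Variables (n h : nat).
Implicit Types (I J : {set 'I_n}) (s : 'S_n).

Definition shift_matching (I J : {set 'I_n}) : {set 'S_n} :=
  [set s : 'S_n | [seq (s i : nat) | i <- enum I] == [seq (s j : nat) + h | j <- enum J]].

Lemma shift_matching_partner I J (j : 'I_n) : j \in J ->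
  exists p, forall s, s \in shift_matching I J -> s p = s j + h :> nat.
Proof.
move=> jJ; set t := index j (enum J).
have t_lt : t < size (enum J) by rewrite index_mem mem_enum.
exists (nth j (enum I) t) => s; rewrite inE => /eqP eq_s.
have t_ltI : t < size (enum I) by rewrite -(size_map (fun i => s i : nat)) eq_s size_map.
have := congr1 (nth 0 ^~ t) eq_s.
by rewrite /= !(nth_map j) // nth_index ?mem_enum.
Qed.

Hypothesis h_gt0 : 0 < h.

Lemma shift_matching_inj I J s1 s2 :
  s1 \in shift_matching I J -> s2 \in shift_matching I J ->
  {in ~: J, s1 =1 s2} -> s1 = s2.
Proof.
move=> M1 M2 eq_out.
suff agree m i : n - s1 i < m -> s1 i = s2 i by apply/permP => i; exact: (agree _ i (ltnSn _)).
elim: m i => [//|m IH] i lt_i.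
have [iJ|iNJ] := boolP (i \in J); last by apply: eq_out; rewrite inE.
have [p pE] := shift_matching_partner I iJ.
have [p1 p2] := (pE _ M1, pE _ M2).
have eq_p : s1 p = s2 p :> nat by congr (val _); apply: IH; have := ltn_ord (s1 p); lia.
by apply: val_inj => /=; lia.
Qed.

Lemma card_shift_matching I J : #|shift_matching I J| <= n ^_ #|~: J|.
Proof.
pose restr (s : 'S_n) : #|~: J|.-tuple 'I_n := map_tuple s (enum_tuple (~: J)).
rewrite -(card_in_imset (f := restr)); last first.
  move=> s1 s2 M1 M2 /(congr1 val) /eq_in_map eq_r.
  by apply: (shift_matching_inj M1 M2) => i iNJ; apply: eq_r; rewrite mem_enum.
rewrite -[n in n ^_ _]card_ord -card_uniq_tuples.
apply: subset_leq_card; apply/subsetP => _ /imsetP [s _ ->].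
by rewrite inE all_predT map_inj_uniq ?enum_uniq //; exact: perm_inj.
Qed.

Lemma Int_ge_shift_matching s k :
  k <= Int (oneline s) (shift_seq h (oneline s)) ->
  exists I J, [/\ #|I| = k, #|J| = k & s \in shift_matching I J].
Proof.
move=> le_k; have [p [p_s p_sh size_p]] := Int_attained (oneline s) (shift_seq h (oneline s)).
have q_s := subseq_trans (take_subseq p k) p_s.
have q_sh := subseq_trans (take_subseq p k) p_sh.
rewrite /shift_seq /oneline -map_comp in q_sh.
have [I qI] := subseq_map_enum q_s.
have [J qJ] := subseq_map_enum q_sh.
have size_q : size (take k p) = k by rewrite size_takel // size_p.
exists I, J; split.
- by rewrite cardE -(size_map (fun i => (s i).+1)) -qI.
- by rewrite cardE -(size_map (fun j => (s j).+1 + h)) -qJ.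
rewrite inE; apply/eqP/(inj_map succn_inj); rewrite -!map_comp.
by transitivity (take k p); [rewrite qI | rewrite qJ; apply: eq_map => j /=; rewrite addSn].
Qed.

Lemma card_Int_ge k :
  #|[set s : 'S_n | k <= Int (oneline s) (shift_seq h (oneline s))]|
    <= 'C(n, k) * 'C(n, k) * n ^_ (n - k).
Proof.
pose S := [set A : {set 'I_n} | #|A| == k].
apply: leq_trans (_ : #|\bigcup_(IJ in setX S S) shift_matching IJ.1 IJ.2| <= _).
  apply/subset_leq_card/subsetP => s; rewrite inE.
  case/Int_ge_shift_matching => [I [J [cI cJ sIJ]]].
  by apply/bigcupP; exists (I, J); rewrite // !inE cI cJ !eqxx.
apply: leq_trans (card_bigcup_leq_sum _ _) _.
apply: leq_trans (_ : \sum_(IJ in setX S S) n ^_ (n - k) <= _).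
  apply: leq_sum => -[I J]; rewrite !inE => /andP [_ /eqP cJ].
  have -> : n - k = #|~: J| by rewrite cardsCs setCK card_ord cJ.
  exact: card_shift_matching.
by rewrite sum_nat_const cardsX card_draws card_ord.
Qed.

Lemma card_Int_ge_mul_fact k :
  #|[set s : 'S_n | k <= Int (oneline s) (shift_seq h (oneline s))]| * k`!
    <= 'C(n, k) * 'C(n, k) * n`!.
Proof.
have [le_kn|lt_nk] := leqP k n; last first.
  by have := card_Int_ge k; rewrite bin_small // !muln0 !mul0n leqn0 => /eqP ->.
rewrite -[in X in _ <= X](ffact_fact (leq_subr k n)) subKn // mulnA.
by rewrite leq_mul2r card_Int_ge orbT.
Qed.

End ShiftMatching.

Open Scope R_scope.

Lemma factorial_fact k : k`! = fact k.
Proof. by elim: k => // k IH; rewrite factS IH. Qed.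

Lemma INR_factorial_gt0 k : 0 < INR k`!.
Proof. by rewrite factorial_fact; apply: INR_fact_lt_0. Qed.

Lemma INR_expn m k : INR (m ^ k) = INR m ^ k.
Proof. by elim: k => // k IH; rewrite expnS -multE mult_INR IH. Qed.

Lemma ffact_leq_expn n k : (n ^_ k <= n ^ k)%N.
Proof. by elim: k => // k IH; rewrite ffactnSr expnSr leq_mul // leq_subr. Qed.

Lemma exp_le_exp x y : x <= y -> exp x <= exp y.
Proof. by case/Rle_lt_or_eq_dec => [/exp_increasing/Rlt_le | ->]; [|right]. Qed.

Lemma pow_exp1 k : exp 1 ^ k = exp (INR k).
Proof. by rewrite -Rpower_pow; [rewrite /Rpower ln_exp Rmult_1_r | apply: exp_pos]. Qed.

(* [x ^ k / k!] is a term of the series of [exp x]. *)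
Lemma pow_div_fact_le_exp x k : 0 <= x -> x ^ k / INR (fact k) <= exp x.
Proof.
move=> x_ge0.
have term_ge0 N : 0 <= / INR (fact N) * x ^ N.
  by apply: Rmult_le_pos; [apply/Rlt_le/Rinv_0_lt_compat/INR_fact_lt_0 | apply: pow_le].
have E1_grow : Un_growing (E1 x) by move=> N; rewrite /E1 tech5; have := term_ge0 N.+1; lra.
apply: Rle_trans (growing_ineq _ _ E1_grow (E1_cvg x) k).
rewrite /Rdiv Rmult_comm /E1; case: k => [|k]; first by right.
by rewrite tech5; have := cond_pos_sum _ k term_ge0; lra.
Qed.

Lemma pow_le_exp_mul_fact k : INR k ^ k <= exp (INR k) * INR k`!.
Proof.
have F_pos := INR_factorial_gt0 k.
have := pow_div_fact_le_exp k (pos_INR k); rewrite -factorial_fact => le_exp.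
have := Rmult_le_compat_r _ _ _ (Rlt_le _ _ F_pos) le_exp.
by rewrite /Rdiv Rmult_assoc Rinv_l ?Rmult_1_r //; lra.
Qed.

Lemma Rdiv_le_div_cross a b p q : 0 < p -> 0 < q -> a * q <= b * p -> a / p <= b / q.
Proof.
move=> p_pos q_pos le_ab.
have -> : a / p = a * q * / (p * q) by field; lra.
have -> : b / q = b * p * / (p * q) by field; lra.
by apply: Rmult_le_compat_r => //; apply/Rlt_le/Rinv_0_lt_compat/Rmult_lt_0_compat.
Qed.

Lemma pow_comm x a b : (x ^ a) ^ b = (x ^ b) ^ a.
Proof. by rewrite -!pow_mult Nat.mul_comm. Qed.

Lemma binomial_sq_div_fact_le n k : (0 < k)%N ->
  INR 'C(n, k) * INR 'C(n, k) / INR k`! <= (exp 3 * INR n ^ 2 / INR k ^ 3) ^ k.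
Proof.
move=> k_gt0.
set C := INR 'C(n, k); set F := INR k`!; set K := INR k.
set P := INR n ^ k; set Q := K ^ k; set T := exp K.
have F_pos : 0 < F by apply: INR_factorial_gt0.
have Q_pos : 0 < Q by apply/pow_lt/lt_0_INR/ltP.
have T_pos : 0 < T by apply: exp_pos.
have C_ge0 : 0 <= C by apply: pos_INR.
have CF_le : C * F <= P.
  by rewrite /C /F /P -mult_INR -INR_expn multE bin_ffact; apply/le_INR/leP/ffact_leq_expn.
have QF_le : Q <= T * F by apply: pow_le_exp_mul_fact.
have -> : (exp 3 * INR n ^ 2 / K ^ 3) ^ k = P ^ 2 * T ^ 3 / Q ^ 3.
  have e3 : exp 3 = exp 1 ^ 3 by rewrite pow_exp1 /=; f_equal; ring.
  rewrite /Rdiv !Rpow_mult_distr pow_inv e3 !(pow_comm _ _ k) pow_exp1.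
  by rewrite -/P -/Q -/T pow1; ring.
apply: Rdiv_le_div_cross => //; first exact: pow_lt.
have QF3 : Q ^ 3 <= (T * F) ^ 3 by apply: pow_incr; lra.
have CF2 : (C * F) ^ 2 <= P ^ 2 by apply: pow_incr; nra.
apply: Rle_trans (Rmult_le_compat_l (C * C) _ _ _ QF3) _; first nra.
have -> : C * C * (T * F) ^ 3 = (C * F) ^ 2 * (T ^ 3 * F) by ring.
rewrite [P ^ 2 * _ * _]Rmult_assoc; apply: (Rmult_le_compat_r _ _ _ _ CF2).
by apply: Rmult_le_pos; [apply: pow_le |]; lra.
Qed.

Lemma exp3_div_cube_le x K a : 1 <= x -> 0 < a -> Rpower x (2/3 + a) <= K ->
  exp 3 * x ^ 2 / K ^ 3 <= exp 5 * Rpower x (- (3 * a / 2)).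
Proof.
move=> x_ge1 a_pos N_le; set N := Rpower x (2/3 + a) in N_le.
have x_pos : 0 < x by lra.
have N_pos : 0 < N by apply: exp_pos.
have R_pos : 0 < Rpower x (3 * a) by apply: exp_pos.
have N3 : N ^ 3 = x ^ 2 * Rpower x (3 * a).
  rewrite -(Rpower_pow 3 _ N_pos) /N Rpower_mult -(Rpower_pow 2 _ x_pos) -Rpower_plus.
  by f_equal; rewrite /=; field.
have K3 : x ^ 2 * Rpower x (3 * a) <= K ^ 3 by rewrite -N3; apply: pow_incr; lra.
apply: (@Rle_trans _ (exp 3 / Rpower x (3 * a))).
  apply: Rdiv_le_div_cross => //; first by apply: pow_lt; lra.
  by rewrite Rmult_assoc; apply: Rmult_le_compat_l K3; apply/Rlt_le/exp_pos.
rewrite /Rdiv -Rpower_Ropp.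
apply: Rmult_le_compat; try apply/Rlt_le/exp_pos; first by apply: exp_le_exp; lra.
by apply: Rle_Rpower => //; lra.
Qed.

Lemma pow_le_Rpower c N k : 0 < c <= 1 -> N <= INR k -> c ^ k <= Rpower c N.
Proof.
move=> [c_pos c_le1] N_le; rewrite -(Rpower_pow k _ c_pos); apply: exp_le_exp.
have ln_c : ln c <= 0.
  by rewrite -ln_1; case: c_le1 => [c_lt1|->]; [left; apply: ln_increasing | right].
nra.
Qed.

Lemma RlebP x y : reflect (x <= y) (Rleb x y).
Proof. by rewrite /Rleb; case: Rle_dec => ?; constructor. Qed.

Lemma prob_Int_ge_le1 n h a : prob_Int_ge n h a <= 1.
Proof.
have F_pos := INR_factorial_gt0 n.
rewrite /prob_Int_ge -(Rinv_r (INR n`!)); last lra.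
apply/Rmult_le_compat_r/le_INR/leP; first exact/Rlt_le/Rinv_0_lt_compat.
by rewrite -(card_Sn n) -cardsT subset_leq_card // subsetT.
Qed.

Lemma prob_Int_ge_le_binomial n h a k : (0 < h)%N ->
  (forall m, Rleb (Rpower (INR n) (2/3 + a)) (INR m) -> (k <= m)%N) ->
  prob_Int_ge n h a <= INR 'C(n, k) * INR 'C(n, k) / INR k`!.
Proof.
move=> h_gt0 k_min; rewrite /prob_Int_ge.
set bad_k := [set s : 'S_n | (k <= Int (oneline s) (shift_seq h (oneline s)))%N].
apply: (@Rle_trans _ (INR #|bad_k| / INR n`!)).
  apply/Rmult_le_compat_r/le_INR/leP; first exact/Rlt_le/Rinv_0_lt_compat/INR_factorial_gt0.
  by apply/subset_leq_card/subsetP => s; rewrite !inE => /k_min.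
apply: Rdiv_le_div_cross; try exact: INR_factorial_gt0.
rewrite -!mult_INR; apply/le_INR/leP.
exact: card_Int_ge_mul_fact.
Qed.

Theorem lemma3p6 (alpha : R) (n h : nat) :
  (0 < alpha)%R -> (0 < n)%N -> (0 < h)%N ->
  (prob_Int_ge n h alpha <=
   Rpower (exp 5 * Rpower (INR n) (- (3 * alpha / 2))) (Rpower (INR n) (2/3 + alpha)))%R.
Proof.
move=> alpha_pos n_gt0 h_gt0.
set N := Rpower (INR n) (2/3 + alpha); set c := exp 5 * _.
have N_pos : 0 < N by apply: exp_pos.
have c_pos : 0 < c by apply: Rmult_lt_0_compat; apply: exp_pos.
have [c_ge1|c_lt1] := Rle_lt_dec 1 c.
  apply: Rle_trans (prob_Int_ge_le1 _ _ _) _.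
  by rewrite -(Rpower_O _ c_pos); apply: Rle_Rpower; lra.
have N_bounded : exists k, Rleb N (INR k).
  by have [k k_gt] := INR_unbounded N; exists k; apply/RlebP; lra.
have [k /RlebP N_le_k k_min] := ex_minnP N_bounded.
have k_gt0 : (0 < k)%N by case: k N_le_k {k_min} => [/= N_le0|//]; lra.
apply: Rle_trans (prob_Int_ge_le_binomial h_gt0 k_min) _.
apply: Rle_trans (binomial_sq_div_fact_le n k_gt0) _.
apply: Rle_trans (pow_le_Rpower (conj c_pos (Rlt_le _ _ c_lt1)) N_le_k).
apply: pow_incr; split; last by apply: exp3_div_cube_le => //; apply/(le_INR 1)/leP.
have k3_pos : 0 < INR k ^ 3 by apply/pow_lt/lt_0_INR/ltP.
have n2_ge0 : 0 <= INR n ^ 2 by apply/pow_le/pos_INR.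
have e3_pos := exp_pos 3.
apply: Rmult_le_pos; [nra | exact/Rlt_le/Rinv_0_lt_compat].
Qed.
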